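(* Let $X$ be a locally convex space, let $T:X\rightrightarrows X^{*}$, and let $V\subset X$ with $V\cap D(T)\neq\emptyset$. The following are equivalent: (i) $V$ locates $T$; (ii) $T$ is $V$-NI and $\operatorname{Pr}_{X}[\varphi_{T|_{V}}=c]\cap V\subset D(T)$; (iii) $\operatorname{Pr}_{X}(\operatorname{dom}\varphi_{T|_{V}})\cap V\subset\operatorname{Pr}_{X}([\varphi_{T|_{V}}\ge c]\cap\operatorname{dom}\varphi_{T|_{V}})$ and $\operatorname{Pr}_{X}[\varphi_{T|_{V}}=c]\cap V\subset D(T)$. If, in addition, $T|_{V}\in\mathcal{M}(X)$, then $V$ locates $T$ if and only if $T$ is $V$-NI and $\operatorname{Pr}_{X}[\varphi_{T|_{V}}=c]\cap V=D(T)\cap V$.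
   Context: $X$ is a non-trivial Hausdorff locally convex space, $X^*$ its dual, $c(x,x^* )=\langle x,x^*\rangle$ on $Z=X\times X^*$. Operators are identified with their graphs; $D(T)$ is the domain; $T|_V$ has graph $\operatorname{Graph}T\cap(V\times X^* )$; $\operatorname{Pr}_X$ is the projection onto $X$. $\varphi_{T}(x,x^{*})=\sup\{\langle x,u^{*}\rangle+\langle u,x^{*}\rangle-\langle u,u^{*}\rangle\mid(u,u^{*})\in T\}$ ($\sup\emptyset=-\infty$); $\operatorname{dom}f=\{f<\infty\}$; $[f\le g]=\{z\mid f(z)\le g(z)\}$, etc. $\mathcal M(X)$: monotone operators with non-empty graph. $V$ locates $T$ if $\operatorname{Pr}_X([\varphi_{T|_V}\le c])\cap V\subset D(T)$; $T$ is $V$-NI if $\varphi_{T|_V}\ge c$ on $V\times X^*$. *)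

From HB Require Import structures.
From mathcomp Require Import all_boot all_order all_algebra.
From mathcomp Require Import all_classical all_reals all_analysis.
Set Implicit Arguments. Unset Strict Implicit. Unset Printing Implicit Defensive.
Import Order.TTheory GRing.Theory Num.Theory.
Local Open Scope classical_set_scope.
Local Open Scope ring_scope.

(* X : a real locally convex space (tvsType R, locally convex by definition).
   X^* : the topological dual = continuous linear functionals X -> R. *)
Section Dual.
Context (R : realType) (X : tvsType R).

Definition is_dual (f : X -> R) : Prop :=
  (forall (a : R) (x y : X), f (a *: x + y) = a * f x + f y) /\ continuous (f : X -> R^o).

Definition dual := {f : X -> R | is_dual f}.

Definition pairing (x : X) (xs : dual) : R := proj1_sig xs x.
Definition cpl (z : X * dual) : R := pairing z.1 z.2.

(* operators identified with their graphs *)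
Definition domain (T : set (X * dual)) : set X := [set x | exists xs, T (x, xs)].
Definition restr (T : set (X * dual)) (V : set X) : set (X * dual) :=
  [set z | T z /\ V z.1].
Definition PrX (A : set (X * dual)) : set X := fst @` A.

(* Fitzpatrick-type function; ereal_sup set0 = -oo *)
Definition phi (T : set (X * dual)) (z : X * dual) : \bar R :=
  ereal_sup [set ((pairing z.1 u.2 + pairing u.1 z.2 - pairing u.1 u.2)%:E)%E
            | u in T].

Definition edom (f : X * dual -> \bar R) : set (X * dual) := [set z | (f z < +oo)%E].

Definition monotone_op (T : set (X * dual)) : Prop :=
  forall z w, T z -> T w -> 0 <= pairing (z.1 - w.1) z.2 - pairing (z.1 - w.1) w.2.
Definition Mon (T : set (X * dual)) : Prop := monotone_op T /\ T !=set0.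

Definition locates (V : set X) (T : set (X * dual)) : Prop :=
  PrX [set z | (phi (restr T V) z <= (cpl z)%:E)%E] `&` V `<=` domain T.

Definition V_NI (V : set X) (T : set (X * dual)) : Prop :=
  forall z : X * dual, V z.1 -> ((cpl z)%:E <= phi (restr T V) z)%E.

End Dual.

From HB Require Import structures.
From mathcomp Require Import all_boot all_order all_algebra.
From mathcomp Require Import all_classical all_reals all_analysis.
From mathcomp Require Import ring lra.
Import Order.TTheory GRing.Theory Num.Theory.
Local Open Scope classical_set_scope.
Local Open Scope ring_scope.

(* For fixed x, the map w |-> phi_T(x, w) - <x, w> is a supremum of affine
   functions of w, hence convex and lower semicontinuous along any segment of
   functionals. If it is <= 0 at one end and finite and >= 0 at the other, it
   therefore vanishes somewhere in between: this intermediate-value step turns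
   condition (iii) into a point of [phi_{T|V} = c] above x. Everything else
   follows from phi_{T|V}(x, w) >= <x, w> for x in V /\ D(T), and from the
   reverse inequality on the graph of a monotone operator. *)

Section EFinFamilySup.
Context {R : realType} {I : Type} {A : set I}.

Lemma ereal_sup_EFin_ubound (g : I -> R) i :
  A i -> ((g i)%:E <= ereal_sup [set (g i)%:E | i in A])%E.
Proof. by move=> Ai; apply: ereal_sup_ubound; exists i. Qed.

Lemma ereal_sup_EFinDl (r : R) (g : I -> R) :
  ereal_sup [set (r + g i)%:E | i in A] =
  (r%:E + ereal_sup [set (g i)%:E | i in A])%E.
Proof.
have le_shift (q : R) (h : I -> R) : (ereal_sup [set (q + h i)%:E | i in A] <=
    q%:E + ereal_sup [set (h i)%:E | i in A])%E.
  by apply/ereal_supP => _ [i Ai <-]; rewrite EFinD leeD2l // ereal_sup_EFin_ubound.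
apply/le_anti; rewrite le_shift /=.
have := le_shift (- r) (fun i => r + g i).
under eq_imagel do rewrite /= addKr.
by move=> /(leeD2l r%:E); rewrite addeA -EFinD subrr add0e.
Qed.

Lemma ereal_sup_EFin_lt {g : I -> R} (r : R) :
  (ereal_sup [set (g i)%:E | i in A] < r%:E)%E ->
  exists2 d, 0 < d & forall i, A i -> g i <= r - d.
Proof.
case E: ereal_sup => [p| |] //.
- rewrite lte_fin => p_lt_r; exists (r - p); first by rewrite subr_gt0.
  by move=> i Ai; rewrite opprB addrC subrK -lee_fin -E ereal_sup_EFin_ubound.
- by move=> _; exists 1 => // i /(ereal_sup_EFin_ubound g); rewrite E.
Qed.

Lemma ereal_sup_EFin_ltey {g : I -> R} :
  (ereal_sup [set (g i)%:E | i in A] < +oo)%E -> exists K, forall i, A i -> g i <= K.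
Proof.
case E: ereal_sup => [p| |] // _; [exists p | exists 0];
  by move=> i /(ereal_sup_EFin_ubound g); rewrite E.
Qed.

End EFinFamilySup.

Section SegmentIVT.
Context {R : realType} {I : Type} {A : set I} {a b : I -> R}.
Hypotheses (sup_a_le0 : (ereal_sup [set (a i)%:E | i in A] <= 0)%E)
  (sup_b_ge0 : (0 <= ereal_sup [set (b i)%:E | i in A])%E)
  (sup_b_fin : (ereal_sup [set (b i)%:E | i in A] < +oo)%E).

Let G t i := (1 - t) * a i + t * b i.
Let S := [set t | 0 <= t <= 1 /\ forall i, A i -> G t i <= 0].
Let s := sup S.

Let a_le0 {i} : A i -> a i <= 0.
Proof. by move=> Ai; rewrite -lee_fin (le_trans _ sup_a_le0) // ereal_sup_EFin_ubound. Qed.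

Let S0 : S 0.
Proof. by split=> [|i Ai]; rewrite ?lexx ?ler01 // /G subr0 mul1r mul0r addr0 a_le0. Qed.

Let s_ge0 : 0 <= s.
Proof. by apply: sup_upper_bound => //; split; [exists 0 | exists 1 => t [/andP[]]]. Qed.

Let s_le1 : s <= 1.
Proof. by apply: ge_sup; [exists 0 | move=> t [/andP[]]]. Qed.

Let G_sup_le0 i : A i -> G s i <= 0.
Proof.
move=> Ai; have ai := a_le0 Ai.
have -> : G s i = a i + s * (b i - a i) by rewrite /G; ring.
have [ba|ba] := leP (b i - a i) 0; first by have := mulr_ge0_le0 s_ge0 ba; lra.
have : s <= - a i / (b i - a i).
  apply: ge_sup; first by exists 0.
  by move=> t [/andP[t0 t1] Gt]; have := Gt i Ai; rewrite ler_pdivlMr // /G => ?; nra.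
by rewrite ler_pdivlMr //; lra.
Qed.

(* If G s were uniformly negative, convexity in t would keep it nonpositive a
   little to the right of s, since G 1 = b is bounded above. *)
Let G_sup_not_neg d : 0 < d -> ~ (forall i, A i -> G s i <= - d).
Proof.
move=> d0 Gd.
have [K bK] := ereal_sup_EFin_ltey sup_b_fin.
have [s1|s_lt1] := eqVneq s 1.
  move: sup_b_ge0; apply/negP; rewrite -ltNge; apply: (@le_lt_trans _ _ (- d)%:E).
    by apply/ereal_supP => _ [i Ai <-]; have := Gd i Ai; rewrite s1 /G lee_fin; lra.
  by rewrite lte_fin oppr_lt0.
pose K' := Num.max K 0.
pose l := d / (K' + d).
have K'0 : 0 <= K' by rewrite le_max lexx orbT.
have Kd : 0 < K' + d by lra.
have l0 : 0 < l by rewrite divr_gt0.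
have lK : l * (K' + d) = d by rewrite /l mulfVK // gt_eqF.
have l1 : l <= 1 by rewrite ler_pdivrMr // mul1r; lra.
pose t := s + l * (1 - s).
have St : S t.
  split.
    have s1 : 0 <= 1 - s by rewrite subr_ge0.
    have l1' : 0 <= 1 - l by rewrite subr_ge0.
    apply/andP; split; first by rewrite addr_ge0 // mulr_ge0 // ltW.
    rewrite -subr_ge0 (_ : 1 - t = (1 - l) * (1 - s)) ?mulr_ge0 //.
    by rewrite /t; ring.
  move=> i Ai; have -> : G t i = (1 - l) * G s i + l * b i by rewrite /G /t; ring.
  have h1 : (1 - l) * G s i <= (1 - l) * (- d) by apply: ler_wpM2l; [lra | exact: Gd].
  have h2 : l * b i <= l * K' by apply: ler_wpM2l; [exact: ltW | rewrite le_max bK].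
  nra.
have : t <= s by apply: sup_upper_bound => //; split; [exists 0 | exists 1 => ? [/andP[]]].
have : s < 1 by rewrite lt_neqAle s_lt1 s_le1.
rewrite /t; nra.
Qed.

Lemma ereal_sup_segment_ivt :
  exists2 t, 0 <= t <= 1 & ereal_sup [set ((1 - t) * a i + t * b i)%:E | i in A] = 0%E.
Proof.
exists s; first by rewrite s_ge0 s_le1.
apply/le_anti/andP; split.
  by apply/ereal_supP => _ [i Ai <-]; rewrite lee_fin G_sup_le0.
rewrite leNgt; apply/negP => /ereal_sup_EFin_lt[d d0 Gd].
by apply: (@G_sup_not_neg d d0) => i /Gd; rewrite sub0r.
Qed.

End SegmentIVT.

Section Fitzpatrick.
Context {R : realType} {X : tvsType R}.
Implicit Types (T : set (X * dual X)) (V : set X).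

Lemma pairingB (x y : X) (w : dual X) : pairing (x - y) w = pairing x w - pairing y w.
Proof.
case: w => f [lf ?]; rewrite /pairing /=.
by rewrite -scaleN1r addrC lf; ring.
Qed.

Lemma is_dual_lerp (xs ys : dual X) (t : R) :
  is_dual (fun v => (1 - t) * pairing v xs + t * pairing v ys).
Proof.
case: xs ys => [f [lf cf]] [g [lg cg]]; rewrite /pairing /=; split.
  by move=> r x y; rewrite lf lg; ring.
move=> x; apply: (@continuousD _ R^o); apply: cvgMl_tmp; [exact: cf | exact: cg].
Qed.

Definition dual_lerp (xs ys : dual X) (t : R) : dual X := exist _ _ (is_dual_lerp xs ys t).

Definition phi_term (z u : X * dual X) : R :=
  pairing z.1 u.2 + pairing u.1 z.2 - pairing u.1 u.2.

Lemma phi_term_ge T z u : T u -> ((phi_term z u)%:E <= phi T z)%E.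
Proof. exact: ereal_sup_EFin_ubound. Qed.

Lemma phi_le_EFin T z r : (forall u, T u -> phi_term z u <= r) -> (phi T z <= r%:E)%E.
Proof. by move=> le_r; apply/ereal_supP => _ [u Tu <-]; rewrite lee_fin le_r. Qed.

Lemma phi_cplE T z :
  phi T z = ((cpl z)%:E + ereal_sup [set (phi_term z u - cpl z)%:E | u in T])%E.
Proof.
rewrite -ereal_sup_EFinDl; congr ereal_sup.
by apply: eq_imagel => u _; rewrite -/(phi_term z u) addrC subrK.
Qed.

Lemma phi_term_lerp_cpl x xs ys t u :
  phi_term (x, dual_lerp xs ys t) u - cpl (x, dual_lerp xs ys t) =
  (1 - t) * (phi_term (x, xs) u - cpl (x, xs)) + t * (phi_term (x, ys) u - cpl (x, ys)).
Proof. rewrite /phi_term /cpl /=; ring. Qed.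

Lemma exists_phi_eq_cpl {T x xs ys} :
  (phi T (x, xs) <= (cpl (x, xs))%:E)%E ->
  ((cpl (x, ys))%:E <= phi T (x, ys))%E -> (phi T (x, ys) < +oo)%E ->
  exists w, phi T (x, w) = (cpl (x, w))%:E.
Proof.
rewrite !phi_cplE => le_xs ge_ys fin_ys.
have sup_a_le0 : (ereal_sup [set (phi_term (x, xs) u - cpl (x, xs))%:E | u in T] <= 0)%E.
  by move: le_xs; rewrite -[X in (_ <= X)%E]adde0 leeD2lE.
have sup_b_ge0 : (0 <= ereal_sup [set (phi_term (x, ys) u - cpl (x, ys))%:E | u in T])%E.
  by move: ge_ys; rewrite -[X in (X <= _)%E]adde0 leeD2lE.
have sup_b_fin : (ereal_sup [set (phi_term (x, ys) u - cpl (x, ys))%:E | u in T] < +oo)%E.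
  by rewrite -(@lteD2lE _ (cpl (x, ys))%:E) // addey.
have [t _ sup0] := ereal_sup_segment_ivt sup_a_le0 sup_b_ge0 sup_b_fin.
exists (dual_lerp xs ys t); rewrite phi_cplE.
by under eq_imagel do rewrite phi_term_lerp_cpl; rewrite sup0 adde0.
Qed.

Lemma cpl_le_phi_restr {T V x y w} :
  V x -> T (x, y) -> ((cpl (x, w))%:E <= phi (restr T V) (x, w))%E.
Proof.
move=> Vx Txy; have := @phi_term_ge (restr T V) (x, w) (x, y) (conj Txy Vx).
by rewrite /phi_term /= [X in X - _]addrC addrK.
Qed.

Lemma phi_le_cpl_monotone T z : monotone_op T -> T z -> (phi T z <= (cpl z)%:E)%E.
Proof.
move=> monoT Tz; apply: phi_le_EFin => u Tu; have := monoT z u Tz Tu.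
by rewrite /phi_term /cpl !pairingB; lra.
Qed.

End Fitzpatrick.

Section Locating.
Context {R : realType} {X : tvsType R} (T : set (X * dual X)) (V : set X).
Local Notation phiV := (phi (restr T V)).

Lemma locates_V_NI : locates V T -> V_NI V T.
Proof.
move=> locV [x w] Vx; have [le_c|/ltW //] := leP (phiV (x, w)) (cpl (x, w))%:E.
have [y Txy] : domain T x by apply: locV; split => //; exists (x, w).
exact: cpl_le_phi_restr Vx Txy.
Qed.

Lemma locates_iff_V_NI :
  locates V T <-> V_NI V T /\ PrX [set z | phiV z = (cpl z)%:E] `&` V `<=` domain T.
Proof.
split=> [locV | [NI sub_dom]].
  split; first exact: locates_V_NI.
  by move=> x [[z /= phi_c <-] Vx]; apply: locV; split => //; exists z; rewrite //= phi_c.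
move=> x [[z /= le_c <-] Vx]; apply: sub_dom; split => //; exists z => //=.
by apply/le_anti; rewrite le_c NI.
Qed.

Lemma locates_iff_PrX_edom :
  locates V T <->
  PrX (edom phiV) `&` V `<=` PrX ([set z | (cpl z)%:E <= phiV z]%E `&` edom phiV) /\
  PrX [set z | phiV z = (cpl z)%:E] `&` V `<=` domain T.
Proof.
split=> [locV | [sub_ge sub_dom]].
  have [NI sub_dom] := locates_iff_V_NI.1 locV; split => //.
  by move=> x [[z /= fin_z <-] Vx]; exists z => //; split => //; exact: NI.
move=> _ [[[x xs] /= le_c <-] Vx].
have fin_xs : (phiV (x, xs) < +oo)%E by apply: le_lt_trans le_c (ltry _).
have /sub_ge[[y ys] [ge_c fin_ys] /= eq_y] : (PrX (edom phiV) `&` V) x.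
  by split => //; exists (x, xs).
subst y.
have [w eq_w] := exists_phi_eq_cpl le_c ge_c fin_ys.
by apply: sub_dom; split => //; exists (x, w).
Qed.

Lemma locates_iff_V_NI_monotone : monotone_op (restr T V) ->
  locates V T <->
  V_NI V T /\ PrX [set z | phiV z = (cpl z)%:E] `&` V = domain T `&` V.
Proof.
move=> monoTV; split=> [locV | [NI eq_dom]].
  have [NI sub_dom] := locates_iff_V_NI.1 locV; split => //.
  apply/seteqP; split=> x; first by move=> xV; split; [exact: sub_dom | exact: xV.2].
  move=> [[y Txy] Vx]; split => //; exists (x, y) => //=.
  apply/le_anti; rewrite (cpl_le_phi_restr Vx Txy) andbT.
  exact: phi_le_cpl_monotone monoTV (conj Txy Vx).
by apply/locates_iff_V_NI; split => //; rewrite eq_dom => x [].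
Qed.

End Locating.

Theorem theorem2p11 (R : realType) (X : tvsType R)
  (hX : hausdorff_space X) (ntX : exists x : X, x != 0)
  (T : set (X * dual X)) (V : set X) :
  V `&` domain T !=set0 ->
  ((locates V T <->
      (V_NI V T /\
       PrX [set z | phi (restr T V) z = (cpl z)%:E] `&` V `<=` domain T)) /\
   (locates V T <->
      (PrX (edom (phi (restr T V))) `&` V `<=`
         PrX ([set z | (cpl z)%:E <= phi (restr T V) z]%E `&` edom (phi (restr T V))) /\
       PrX [set z | phi (restr T V) z = (cpl z)%:E] `&` V `<=` domain T))) /\
  (Mon (restr T V) ->
   (locates V T <->
      (V_NI V T /\
       PrX [set z | phi (restr T V) z = (cpl z)%:E] `&` V = domain T `&` V))).
Proof.
move=> _; split; first split.
- exact: locates_iff_V_NI.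
- exact: locates_iff_PrX_edom.
- by move=> [monoTV _]; exact: locates_iff_V_NI_monotone.
Qed.
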